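(* Let $\mathcal{C}_1,\mathcal{C}_2$ be small categories. The functor $\mathrm{Corr}_{\mathrm{eq}}(\mathcal{C}_1,\mathcal{C}_2)\to\mathrm{Funct}(\mathcal{C}_1,\mathcal{C}_2)$, sending $\mathcal{C}_1\xleftarrow{F}\mathcal{C}_{12}\xrightarrow{G}\mathcal{C}_2$ to $G\circ F^{-1}$, is left adjoint to the functor $\mathrm{Graph}:\mathrm{Funct}(\mathcal{C}_1,\mathcal{C}_2)\to\mathrm{Corr}_{\mathrm{eq}}(\mathcal{C}_1,\mathcal{C}_2)$. The unit of the adjunction is given by the functor $\mathcal{C}_{12}\to\mathrm{Graph}_{GF^{-1}}$ that sends $c$ to $(F(c),G(c),\psi)$. Here $\psi:GF^{-1}F(c)\xrightarrow{\sim}G(c)$ comes from the isomorphism $F^{-1}F(c)\xrightarrow{\sim}c$.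
   Context: $\mathrm{Cats}'$ is the naive 1-category of small categories, whose morphisms are functors on the nose. $\mathrm{Corr}(\mathcal{C}_1,\mathcal{C}_2)$ is the category of diagrams $\mathcal{C}_1\xleftarrow{F}\mathcal{C}_{12}\xrightarrow{G}\mathcal{C}_2$ in $\mathrm{Cats}'$. Its morphisms are functors $H$ between the middle terms with $F'H=F$, $G'H=G$ on the nose. $\mathrm{Corr}_{\mathrm{eq}}(\mathcal{C}_1,\mathcal{C}_2)$ is the full subcategory of those with $F$ an equivalence of categories. $F^{-1}$ denotes a quasi-inverse of $F$, so $G\circ F^{-1}$ is defined up to unique isomorphism. For a functor $\Phi:\mathcal{C}_1\to\mathcal{C}_2$, $\mathrm{Graph}_\Phi$ is the category of triples $(c_1,c_2,\psi)$ with $c_i\in\mathcal{C}_i$ and $\psi:\Phi(c_1)\xrightarrow{\sim}c_2$. $\mathrm{Graph}(\Phi)$ is the correspondence $\mathcal{C}_1\leftarrow\mathrm{Graph}_\Phi\to\mathcal{C}_2$ given by the projections. It lies in $\mathrm{Corr}_{\mathrm{eq}}$. *)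

(* a small self-contained layer of 1-category theory.
   Equality of functors is Leibniz equality ("on the nose"); proof
   components are handled with proof irrelevance. *)
From Stdlib Require Import ProofIrrelevance.

Set Implicit Arguments.
Unset Strict Implicit.

Record Category := {
  Ob :> Type;
  Hom : Ob -> Ob -> Type;
  idm : forall a, Hom a a;
  comp : forall a b c, Hom b c -> Hom a b -> Hom a c;
  comp_id_l : forall a b (f : Hom a b), comp (idm b) f = f;
  comp_id_r : forall a b (f : Hom a b), comp f (idm a) = f;
  comp_assoc : forall a b c d (h : Hom c d) (g : Hom b c) (f : Hom a b),
      comp h (comp g f) = comp (comp h g) f
}.
Arguments Hom {C} a b : rename.
Arguments idm {C} a : rename.
Arguments comp {C a b c} g f : rename.

Definition is_iso (C : Category) (a b : C) (f : Hom a b) : Prop :=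
  exists g : Hom b a, comp g f = idm a /\ comp f g = idm b.

Record Functor (C D : Category) := {
  fobj :> C -> D;
  fmap : forall a b, Hom a b -> Hom (fobj a) (fobj b);
  fmap_id : forall a, fmap (idm a) = idm (fobj a);
  fmap_comp : forall a b c (g : Hom b c) (f : Hom a b),
      fmap (comp g f) = comp (fmap g) (fmap f)
}.
Arguments fmap {C D} F {a b} f : rename.

Definition Fid (C : Category) : Functor C C :=
  {| fobj := fun a => a; fmap := fun a b f => f;
     fmap_id := fun a => eq_refl; fmap_comp := fun a b c g f => eq_refl |}.

Program Definition Fcomp (C D E : Category) (G : Functor D E) (F : Functor C D)
  : Functor C E :=
  {| fobj := fun a => G (F a); fmap := fun a b f => fmap G (fmap F f) |}.
Next Obligation. intros; simpl; rewrite !fmap_id; reflexivity. Qed.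
Next Obligation. intros; simpl; rewrite !fmap_comp; reflexivity. Qed.

Record NatIso (C D : Category) (F G : Functor C D) := {
  iso_fwd : forall a, Hom (F a) (G a);
  iso_bwd : forall a, Hom (G a) (F a);
  iso_nat : forall a b (f : Hom a b),
      comp (fmap G f) (iso_fwd a) = comp (iso_fwd b) (fmap F f);
  iso_bwd_fwd : forall a, comp (iso_bwd a) (iso_fwd a) = idm (F a);
  iso_fwd_bwd : forall a, comp (iso_fwd a) (iso_bwd a) = idm (G a)
}.
Arguments iso_fwd {C D F G} n a : rename.
Arguments iso_bwd {C D F G} n a : rename.

Lemma iso_bwd_nat (C D : Category) (F G : Functor C D) (n : NatIso F G)
  a b (f : Hom a b) :
  comp (fmap F f) (iso_bwd n a) = comp (iso_bwd n b) (fmap G f).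
Proof.
  rewrite <- (comp_id_l (comp (fmap F f) (iso_bwd n a))).
  rewrite <- (iso_bwd_fwd n b), <- comp_assoc, (comp_assoc (iso_fwd n b)).
  rewrite <- iso_nat, <- !comp_assoc, iso_fwd_bwd, comp_id_r. reflexivity.
Qed.

Record QuasiInverse (C D : Category) (F : Functor C D) := {
  qinv : Functor D C;
  qunit : NatIso (Fcomp qinv F) (Fid C);
  qcounit : NatIso (Fcomp F qinv) (Fid D)
}.

Definition IsEquivalence (C D : Category) (F : Functor C D) : Prop :=
  inhabited (QuasiInverse F).

Section Graph.
Context (C1 C2 : Category) (Phi : Functor C1 C2).

Record GraphOb := {
  g1 : C1;
  g2 : C2;
  gpsi : Hom (Phi g1) g2;
  gpsi_iso : is_iso gpsi
}.

Record GraphHom (x y : GraphOb) := {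
  h1 : Hom (g1 x) (g1 y);
  h2 : Hom (g2 x) (g2 y);
  h_comm : comp (gpsi y) (fmap Phi h1) = comp h2 (gpsi x)
}.

Lemma GraphHom_eq (x y : GraphOb) (f g : GraphHom x y) :
  h1 f = h1 g -> h2 f = h2 g -> f = g.
Proof.
  destruct f as [f1 f2 fc], g as [g1' g2' gc]; simpl; intros -> ->.
  f_equal; apply proof_irrelevance.
Qed.

Program Definition Graph_id (x : GraphOb) : GraphHom x x :=
  {| h1 := idm (g1 x); h2 := idm (g2 x) |}.
Next Obligation. intros; simpl. rewrite fmap_id, comp_id_l, comp_id_r; reflexivity. Qed.

Program Definition Graph_comp (x y z : GraphOb) (g : GraphHom y z)
  (f : GraphHom x y) : GraphHom x z :=
  {| h1 := comp (h1 g) (h1 f); h2 := comp (h2 g) (h2 f) |}.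
Next Obligation. intros; simpl.
  rewrite fmap_comp, comp_assoc, h_comm, <- comp_assoc, h_comm, comp_assoc.
  reflexivity.
Qed.

Program Definition GraphCat : Category :=
  {| Ob := GraphOb; Hom := GraphHom; idm := Graph_id; comp := Graph_comp |}.
Next Obligation. intros; simpl; apply GraphHom_eq; simpl; apply comp_id_l. Qed.
Next Obligation. intros; simpl; apply GraphHom_eq; simpl; apply comp_id_r. Qed.
Next Obligation. intros; simpl; apply GraphHom_eq; simpl; apply comp_assoc. Qed.

Program Definition gproj1 : Functor GraphCat C1 :=
  {| fobj := fun x => g1 x; fmap := fun x y f => h1 f |}.
Next Obligation. reflexivity. Qed.
Next Obligation. reflexivity. Qed.
Program Definition gproj2 : Functor GraphCat C2 :=
  {| fobj := fun x => g2 x; fmap := fun x y f => h2 f |}.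
Next Obligation. reflexivity. Qed.
Next Obligation. reflexivity. Qed.

End Graph.

(** The functor Graph on morphisms: a natural isomorphism alpha : Phi ~= Phi'
    induces Graph_Phi -> Graph_Phi', (c1, c2, psi) |-> (c1, c2, psi o alpha^{-1}),
    which commutes on the nose with the projections. *)
Lemma is_iso_comp (C : Category) (a b c : C) (g : Hom b c) (f : Hom a b) :
  is_iso g -> is_iso f -> is_iso (comp g f).
Proof.
  intros [g' [Hg1 Hg2]] [f' [Hf1 Hf2]]. exists (comp f' g'). split.
  - rewrite comp_assoc, <- (comp_assoc f'), Hg1, comp_id_r. exact Hf1.
  - rewrite comp_assoc, <- (comp_assoc g), Hf2, comp_id_r. exact Hg2.
Qed.

Lemma is_iso_bwd (C D : Category) (F G : Functor C D) (n : NatIso F G) a :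
  is_iso (iso_bwd n a).
Proof. exists (iso_fwd n a). split; [apply iso_fwd_bwd | apply iso_bwd_fwd]. Qed.

Lemma is_iso_fwd (C D : Category) (F G : Functor C D) (n : NatIso F G) a :
  is_iso (iso_fwd n a).
Proof. exists (iso_bwd n a). split; [apply iso_bwd_fwd | apply iso_fwd_bwd]. Qed.

Lemma is_iso_fmap (C D : Category) (F : Functor C D) a b (f : Hom a b) :
  is_iso f -> is_iso (fmap F f).
Proof.
  intros [g [H1 H2]]. exists (fmap F g).
  now rewrite <- !fmap_comp, H1, H2, !fmap_id.
Qed.

Section GraphMap.
Context (C1 C2 : Category) (Phi Phi' : Functor C1 C2) (alpha : NatIso Phi Phi').

Definition GraphMap_ob (x : GraphOb Phi) : GraphOb Phi' :=
  {| g1 := g1 x; g2 := g2 x; gpsi := comp (gpsi x) (iso_bwd alpha (g1 x));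
     gpsi_iso := is_iso_comp (gpsi_iso x) (is_iso_bwd alpha (g1 x)) |}.

Program Definition GraphMap_hom (x y : GraphOb Phi) (f : GraphHom x y)
  : GraphHom (GraphMap_ob x) (GraphMap_ob y) :=
  {| h1 := h1 f; h2 := h2 f |}.
Next Obligation. intros; simpl.
  rewrite <- comp_assoc, <- iso_bwd_nat, comp_assoc, h_comm, comp_assoc.
  reflexivity.
Qed.

Program Definition GraphMap : Functor (GraphCat Phi) (GraphCat Phi') :=
  {| fobj := GraphMap_ob; fmap := GraphMap_hom |}.
Next Obligation. intros; simpl; apply GraphHom_eq; reflexivity. Qed.
Next Obligation. intros; simpl; apply GraphHom_eq; reflexivity. Qed.
End GraphMap.

Definition corr_to_funct (C1 C2 C12 : Category) (F : Functor C12 C1)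
  (G : Functor C12 C2) (q : QuasiInverse F) : Functor C1 C2 :=
  Fcomp G (qinv q).

Section Unit.
Context (C1 C2 C12 : Category) (F : Functor C12 C1) (G : Functor C12 C2)
  (q : QuasiInverse F).

Definition unit_ob (c : C12) : GraphOb (corr_to_funct G q) :=
  @Build_GraphOb _ _ (corr_to_funct G q) (F c) (G c)
     (fmap G (iso_fwd (qunit q) c))
     (is_iso_fmap G (is_iso_fwd (qunit q) c)).

Program Definition unit_hom (c d : C12) (f : Hom c d)
  : GraphHom (unit_ob c) (unit_ob d) :=
  {| h1 := fmap F f; h2 := fmap G f |}.
Next Obligation. intros; simpl.
  rewrite <- !fmap_comp. f_equal.
  symmetry. exact (iso_nat (qunit q) f).
Qed.

Program Definition unit_functor : Functor C12 (GraphCat (corr_to_funct G q)) :=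
  {| fobj := unit_ob; fmap := unit_hom |}.
Next Obligation. intros; simpl; apply GraphHom_eq; simpl; apply fmap_id. Qed.
Next Obligation. intros; simpl; apply GraphHom_eq; simpl; apply fmap_comp. Qed.
End Unit.

(* The counit eps of the equivalence F, with quasi-inverse K and unit eta, can be
   corrected to eps' with eps'_(F c) = F eta_c, the triangle identity of an adjoint
   equivalence.  A functor H : C12 -> Graph_Phi lying over F and G is the same as a
   natural isomorphism psi : Phi F ~= G, and GraphMap alpha o unit = H says exactly
   that G eta_c o alpha^-1_(F c) = psi_c for all c.  The transpose
   alpha := Phi eps' o psi^-1 K satisfies this by the triangle identity, and the
   equation pins down alpha^-1 on the objects F c, hence everywhere, since every
   object of C1 is isomorphic to one of them. *)

From Stdlib Require Import ProofIrrelevance IndefiniteDescription FunctionalExtensionality.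

Set Implicit Arguments.
Unset Strict Implicit.

Section Isomorphisms.
Context (C : Category).

Lemma comp_cancel_l (b c : C) (f : Hom b c) (g : Hom c b) :
  comp g f = idm b -> forall a (x y : Hom a b), comp f x = comp f y -> x = y.
Proof.
  intros Hgf a x y E.
  rewrite <- (comp_id_l x), <- (comp_id_l y), <- Hgf, <- !comp_assoc, E.
  reflexivity.
Qed.

Lemma comp_invK (a b c : C) (f : Hom b c) (g : Hom c b) (k : Hom a b) :
  comp g f = idm b -> comp g (comp f k) = k.
Proof. intros Hgf. rewrite comp_assoc, Hgf. apply comp_id_l. Qed.

Definition inverse (a b : C) (f : Hom a b) (Hf : is_iso f) : Hom b a :=
  proj1_sig (constructive_indefinite_description _ Hf).

Lemma inverse_l (a b : C) (f : Hom a b) (Hf : is_iso f) : comp (inverse Hf) f = idm a.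
Proof. exact (proj1 (proj2_sig (constructive_indefinite_description _ Hf))). Qed.

Lemma inverse_r (a b : C) (f : Hom a b) (Hf : is_iso f) : comp f (inverse Hf) = idm b.
Proof. exact (proj2 (proj2_sig (constructive_indefinite_description _ Hf))). Qed.

Definition hom_of_eq (a b : C) (e : a = b) : Hom a b :=
  match e in _ = b' return Hom a b' with eq_refl => idm a end.

Lemma hom_of_eq_id (a : C) (e : a = a) : hom_of_eq e = idm a.
Proof. rewrite (proof_irrelevance _ e eq_refl). reflexivity. Qed.

End Isomorphisms.

Lemma functor_eq (C D : Category) (F G : Functor C D) (e : forall a, F a = G a) :
  (forall a b (f : Hom a b),
      comp (hom_of_eq (e b)) (fmap F f) = comp (fmap G f) (hom_of_eq (e a))) ->
  F = G.
Proof.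
  destruct F as [oF mF idF compF], G as [oG mG idG compG]; simpl in *; intros Hm.
  assert (oF = oG) by (apply functional_extensionality; exact e). subst oG.
  assert (mF = mG) as <-.
  { apply functional_extensionality_dep; intro a.
    apply functional_extensionality_dep; intro b.
    apply functional_extensionality; intro f.
    specialize (Hm a b f). rewrite !hom_of_eq_id, comp_id_l, comp_id_r in Hm.
    exact Hm. }
  f_equal; apply proof_irrelevance.
Qed.

Lemma fmap_iso_inv (C D : Category) (F : Functor C D) (a b : C)
  (f : Hom a b) (g : Hom b a) :
  comp g f = idm a -> comp (fmap F g) (fmap F f) = idm (F a).
Proof. intros E. rewrite <- fmap_comp, E. apply fmap_id. Qed.

Section NatIsos.
Context (C D : Category) (X Y : Functor C D).

Lemma iso_fwd_cancel (n : NatIso X Y) a b (x y : Hom b (X a)) :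
  comp (iso_fwd n a) x = comp (iso_fwd n a) y -> x = y.
Proof. apply comp_cancel_l with (iso_bwd n a), iso_bwd_fwd. Qed.

Lemma NatIso_eq (n m : NatIso X Y) : (forall a, iso_bwd n a = iso_bwd m a) -> n = m.
Proof.
  destruct n as [nf nb nnat nbf nfb], m as [mf mb mnat mbf mfb]; simpl; intros Hb.
  assert (nb = mb) by (apply functional_extensionality_dep; exact Hb). subst mb.
  assert (nf = mf) as <-.
  { apply functional_extensionality_dep; intro a.
    rewrite <- (comp_id_l (mf a)), <- (nfb a), <- comp_assoc, mbf, comp_id_r.
    reflexivity. }
  f_equal; apply proof_irrelevance.
Qed.

Lemma iso_bwd_conj (n : NatIso X Y) a a' (f : Hom a' a) (g : Hom a a') :
  comp f g = idm a -> iso_bwd n a = comp (fmap X f) (comp (iso_bwd n a') (fmap Y g)).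
Proof.
  intros Hfg.
  rewrite comp_assoc, iso_bwd_nat, <- comp_assoc, <- fmap_comp, Hfg, fmap_id, comp_id_r.
  reflexivity.
Qed.

Lemma NatIso_eq_on_image (B : Category) (F : Functor B C) (q : QuasiInverse F)
  (n m : NatIso X Y) : (forall b, iso_bwd n (F b) = iso_bwd m (F b)) -> n = m.
Proof.
  intros Hb. apply NatIso_eq; intro a.
  pose proof (iso_fwd_bwd (qcounit q) a) as Heps.
  rewrite (@iso_bwd_conj n a _ _ _ Heps), (@iso_bwd_conj m a _ _ _ Heps).
  do 2 f_equal. apply Hb.
Qed.
End NatIsos.

Section AdjointCounit.
Context (C D : Category) (F : Functor C D) (q : QuasiInverse F).
Local Notation K := (qinv q).
Local Notation eta c := (iso_fwd (qunit q) c : Hom (K (F c)) c).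
Local Notation eta_inv c := (iso_bwd (qunit q) c : Hom c (K (F c))).
Local Notation eps d := (iso_fwd (qcounit q) d : Hom (F (K d)) d).
Local Notation eps_inv d := (iso_bwd (qcounit q) d : Hom d (F (K d))).

Lemma qunit_nat c c' (f : Hom c c') : comp f (eta c) = comp (eta c') (fmap K (fmap F f)).
Proof. exact (iso_nat (qunit q) f). Qed.

Lemma qcounit_nat d d' (g : Hom d d') : comp g (eps d) = comp (eps d') (fmap F (fmap K g)).
Proof. exact (iso_nat (qcounit q) g). Qed.

Lemma qcounit_inv_nat d d' (g : Hom d d') :
  comp (fmap F (fmap K g)) (eps_inv d) = comp (eps_inv d') g.
Proof. exact (iso_bwd_nat (qcounit q) g). Qed.

Lemma qcounit_fwd_bwd d : comp (eps d) (eps_inv d) = idm d.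
Proof. exact (iso_fwd_bwd (qcounit q) d). Qed.

Lemma qunit_KF c : eta (K (F c)) = fmap K (fmap F (eta c)).
Proof. apply (iso_fwd_cancel (n := qunit q) (a := c)). apply qunit_nat. Qed.

Definition adjoint_counit_fwd d : Hom (F (K d)) d :=
  comp (eps d) (comp (fmap F (eta (K d))) (eps_inv (F (K d)))).
Definition adjoint_counit_bwd d : Hom d (F (K d)) :=
  comp (eps (F (K d))) (comp (fmap F (eta_inv (K d))) (eps_inv d)).

Lemma adjoint_counit_nat d d' (g : Hom d d') :
  comp g (adjoint_counit_fwd d) = comp (adjoint_counit_fwd d') (fmap F (fmap K g)).
Proof.
  unfold adjoint_counit_fwd.
  rewrite comp_assoc, qcounit_nat, <- !comp_assoc. f_equal.
  rewrite comp_assoc, <- fmap_comp, qunit_nat, fmap_comp, <- !comp_assoc. f_equal.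
  apply qcounit_inv_nat.
Qed.

Lemma adjoint_counit_bwd_fwd d :
  comp (adjoint_counit_bwd d) (adjoint_counit_fwd d) = idm (F (K d)).
Proof.
  unfold adjoint_counit_fwd, adjoint_counit_bwd. rewrite <- !comp_assoc.
  rewrite (comp_invK _ (iso_bwd_fwd (qcounit q) d)).
  rewrite (comp_invK _ (fmap_iso_inv F (iso_bwd_fwd (qunit q) (K d)))).
  exact (iso_fwd_bwd (qcounit q) _).
Qed.

Lemma adjoint_counit_fwd_bwd d : comp (adjoint_counit_fwd d) (adjoint_counit_bwd d) = idm d.
Proof.
  unfold adjoint_counit_fwd, adjoint_counit_bwd. rewrite <- !comp_assoc.
  rewrite (comp_invK _ (iso_bwd_fwd (qcounit q) (F (K d)))).
  rewrite (comp_invK _ (fmap_iso_inv F (iso_fwd_bwd (qunit q) (K d)))).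
  exact (iso_fwd_bwd (qcounit q) _).
Qed.

Lemma adjoint_counit_triangle c : adjoint_counit_fwd (F c) = fmap F (eta c).
Proof.
  unfold adjoint_counit_fwd.
  rewrite qunit_KF, comp_assoc, <- qcounit_nat, <- comp_assoc, qcounit_fwd_bwd.
  apply comp_id_r.
Qed.
End AdjointCounit.

Section Transpose.
Context (C1 C2 C12 : Category) (F : Functor C12 C1) (G : Functor C12 C2)
  (q : QuasiInverse F) (Phi : Functor C1 C2) (psi : NatIso (Fcomp Phi F) G).
Local Notation K := (qinv q).
Local Notation eta c := (iso_fwd (qunit q) c : Hom (K (F c)) c).
Local Notation eps' := (adjoint_counit_fwd q).
Local Notation eps'_inv := (adjoint_counit_bwd q).
Local Notation psi_fwd c := (iso_fwd psi c : Hom (Phi (F c)) (G c)).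
Local Notation psi_bwd c := (iso_bwd psi c : Hom (G c) (Phi (F c))).

Lemma psi_nat c c' (f : Hom c c') :
  comp (fmap G f) (psi_fwd c) = comp (psi_fwd c') (fmap Phi (fmap F f)).
Proof. exact (iso_nat psi f). Qed.

Lemma psi_bwd_nat c c' (f : Hom c c') :
  comp (fmap Phi (fmap F f)) (psi_bwd c) = comp (psi_bwd c') (fmap G f).
Proof. exact (iso_bwd_nat psi f). Qed.

Definition transpose_fwd d : Hom (G (K d)) (Phi d) :=
  comp (fmap Phi (eps' d)) (psi_bwd (K d)).
Definition transpose_bwd d : Hom (Phi d) (G (K d)) :=
  comp (psi_fwd (K d)) (fmap Phi (eps'_inv d)).

Lemma transpose_nat d d' (g : Hom d d') :
  comp (fmap Phi g) (transpose_fwd d) = comp (transpose_fwd d') (fmap G (fmap K g)).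
Proof.
  unfold transpose_fwd.
  rewrite comp_assoc, <- fmap_comp, adjoint_counit_nat, fmap_comp, <- !comp_assoc.
  f_equal. apply psi_bwd_nat.
Qed.

Lemma transpose_bwd_fwd d : comp (transpose_bwd d) (transpose_fwd d) = idm (G (K d)).
Proof.
  unfold transpose_fwd, transpose_bwd. rewrite <- !comp_assoc.
  rewrite (comp_invK _ (fmap_iso_inv Phi (adjoint_counit_bwd_fwd q d))).
  exact (iso_fwd_bwd psi _).
Qed.

Lemma transpose_fwd_bwd d : comp (transpose_fwd d) (transpose_bwd d) = idm (Phi d).
Proof.
  unfold transpose_fwd, transpose_bwd. rewrite <- !comp_assoc.
  rewrite (comp_invK _ (iso_bwd_fwd psi (K d))).
  exact (fmap_iso_inv Phi (adjoint_counit_fwd_bwd q d)).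
Qed.

Definition transpose : NatIso (corr_to_funct G q) Phi :=
  @Build_NatIso _ _ (corr_to_funct G q) Phi transpose_fwd transpose_bwd
    transpose_nat transpose_bwd_fwd transpose_fwd_bwd.

Definition unit_compatible (alpha : NatIso (corr_to_funct G q) Phi) : Prop :=
  forall c, comp (fmap G (eta c)) (iso_bwd alpha (F c)) = psi_fwd c.

Lemma transpose_unit_compatible : unit_compatible transpose.
Proof.
  intros c; simpl; unfold transpose_bwd.
  rewrite comp_assoc, psi_nat, <- comp_assoc, <- fmap_comp, <- adjoint_counit_triangle.
  rewrite adjoint_counit_fwd_bwd, fmap_id. apply comp_id_r.
Qed.

Lemma unit_compatible_unique (alpha beta : NatIso (corr_to_funct G q) Phi) :
  unit_compatible alpha -> unit_compatible beta -> alpha = beta.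
Proof.
  intros Halpha Hbeta. apply (NatIso_eq_on_image q). intros c.
  apply (comp_cancel_l (fmap_iso_inv G (iso_bwd_fwd (qunit q) c))).
  transitivity (psi_fwd c); [apply Halpha | symmetry; apply Hbeta].
Qed.
End Transpose.

Section GraphFunctors.
Context (C C1 C2 : Category) (Phi : Functor C1 C2).

Lemma GraphOb_eq_iff (x : GraphOb Phi) (p : Hom (Phi (g1 x)) (g2 x)) (i : is_iso p) :
  @Build_GraphOb _ _ Phi (g1 x) (g2 x) p i = x <-> p = gpsi x.
Proof.
  destruct x as [a b p' i']; simpl; split.
  - intros E. injection E as E.
    do 2 apply ProofIrrelevanceTheory.EqdepTheory.inj_pairT2 in E.
    exact E.
  - intros ->. rewrite (proof_irrelevance _ i i'). reflexivity.
Qed.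

Lemma h1_hom_of_eq (x y : GraphCat Phi) (e : x = y) :
  h1 (hom_of_eq e) = hom_of_eq (f_equal (@g1 _ _ Phi) e).
Proof. destruct e. reflexivity. Qed.

Lemma h2_hom_of_eq (x y : GraphCat Phi) (e : x = y) :
  h2 (hom_of_eq e) = hom_of_eq (f_equal (@g2 _ _ Phi) e).
Proof. destruct e. reflexivity. Qed.

Program Definition graph_iso (H : Functor C (GraphCat Phi)) :
  NatIso (Fcomp Phi (Fcomp (gproj1 Phi) H)) (Fcomp (gproj2 Phi) H) :=
  {| iso_fwd := fun c => gpsi (H c); iso_bwd := fun c => inverse (gpsi_iso (H c));
     iso_nat := fun a b f => eq_sym (h_comm (fmap H f)) |}.
Next Obligation. apply inverse_l. Qed.
Next Obligation. apply inverse_r. Qed.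

Lemma GraphMap_unit_eq_iff (H : Functor C (GraphCat Phi))
  (q : QuasiInverse (Fcomp (gproj1 Phi) H))
  (alpha : NatIso (corr_to_funct (Fcomp (gproj2 Phi) H) q) Phi) :
  Fcomp (GraphMap alpha) (unit_functor (Fcomp (gproj2 Phi) H) q) = H <->
  unit_compatible (graph_iso H) alpha.
Proof.
  split.
  - intros E c. exact (proj1 (GraphOb_eq_iff (x := H c) _) (f_equal (fun X => fobj X c) E)).
  - intros Hcompat.
    apply functor_eq with (e := fun c => proj2 (GraphOb_eq_iff (x := H c) _) (Hcompat c)).
    intros a b f; apply GraphHom_eq; simpl.
    + rewrite !h1_hom_of_eq, !hom_of_eq_id, comp_id_l, comp_id_r. reflexivity.
    + rewrite !h2_hom_of_eq, !hom_of_eq_id, comp_id_l, comp_id_r. reflexivity.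
Qed.
End GraphFunctors.

Theorem lemma5p1p3 (C1 C2 C12 : Category) (F : Functor C12 C1)
  (G : Functor C12 C2) (q : QuasiInverse F) :
  (* the unit is a morphism of Corr_eq(C1,C2) *)
  Fcomp (gproj1 (corr_to_funct G q)) (unit_functor G q) = F /\
  Fcomp (gproj2 (corr_to_funct G q)) (unit_functor G q) = G /\
  (* universal property of the unit: corr_to_funct is left adjoint to Graph *)
  (forall (Phi : Functor C1 C2) (H : Functor C12 (GraphCat Phi)),
      Fcomp (gproj1 Phi) H = F -> Fcomp (gproj2 Phi) H = G ->
      exists! alpha : NatIso (corr_to_funct G q) Phi,
        Fcomp (GraphMap alpha) (unit_functor G q) = H).
Proof.
  split; [|split].
  - unshelve eapply functor_eq; [reflexivity | intros; simpl].
    rewrite comp_id_l, comp_id_r. reflexivity.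
  - unshelve eapply functor_eq; [reflexivity | intros; simpl].
    rewrite comp_id_l, comp_id_r. reflexivity.
  - intros Phi H <- <-.
    exists (transpose q (graph_iso H)). split.
    + apply GraphMap_unit_eq_iff, transpose_unit_compatible.
    + intros beta Hbeta. apply (unit_compatible_unique (psi := graph_iso H)).
      * apply transpose_unit_compatible.
      * apply GraphMap_unit_eq_iff, Hbeta.
Qed.
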